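(* Let $\mathsf{S}$ be a random sprinkle in $d$-dimensional Minkowski spacetime, i.e. the set of points of a Poisson point process with intensity $\rho\cdot\nu$ ($\rho>0$ a constant, $\nu$ the Lebesgue volume measure), equipped with the causal order restricted from Minkowski spacetime. Then, with probability $1$, $\mathsf{S}$ is total locally unsymmetric.
   Context: Minkowski spacetime $\mathbb{M}^d$ is $\mathbb{R}^{d}=\mathbb{R}^{1,d-1}$ with metric $\mathrm{diag}(1,-1,\dots,-1)$, partially ordered by $x\le y$ iff $y-x$ is zero or a future-directed causal vector. For the Poisson process, the number of points in a bounded region $U$ is Poisson distributed with mean $\rho\,\nu(U)$, independently for disjoint regions. Local (un)symmetry: $\ell(X)$ is the cardinality of a longest chain of a poset $X$. A subset $A$ of a poset $X$ is maximally ordered in $X$ if $|\{(a,b)\in A\times A:a<b\}|$ is maximal among subsets of $X$ of cardinality $|A|$. For $\sigma\in\mathrm{Aut}(P)$, $\Sigma(\sigma)=\{a:\sigma(a)\ne a\}$. For a finite poset $Q$ and $r\ge2$: $\sigma$ is a $(Q,r)$-generator if there exist subsets $S_0,\dots,S_{r-1}\subset\Sigma(\sigma)$, each isomorphic to $Q$, which are smallest maximally ordered subsets of $\Sigma(\sigma)$ with $\sigma(S_i)=S_{(i+1)\bmod r}$, $\ell(S_i)=\ell(\Sigma(\sigma))$, $\bigcup_iS_i=\Sigma(\sigma)$; distinct $S_i,S_j$ are $(Q,r)$-symmetric subsets. Elements $a,b$ are $(Q,r,0)$-symmetric if $a=b$; $(Q,r,1)$-symmetric if there are $(Q,r)$-symmetric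 subsets $A,B$ with generator $\sigma$, $a\in A$, $b=\sigma^q(a)\in B$, $1\le q<r$; for $m\ge2$, $(Q,r,m)$-symmetric if not $(Q,r,j)$-symmetric for $j<m$ but there exist $c$, $j<m$ with $a$ $(Q,r,j)$-symmetric to $c$ and $c$ $(Q,r,m-j)$-symmetric to $b$; $(Q,r)$-symmetric if $(Q,r,m)$-symmetric for some $m\ge0$ (an equivalence relation). $P\oslash_rQ$ is the quotient poset of equivalence classes with $E\le F$ iff some $e\in E$, $f\in F$ satisfy $e\le f$. $P$ is locally symmetric if $P\oslash_rQ\not\cong P$ for some finite $Q$ and $r\ge2$, locally unsymmetric otherwise. For $k\in\mathbb{N}_0$, a poset $P$ is $k$-stable locally unsymmetric if for every subset $S\subseteq P$ with $|S|\le k$ the poset $P\setminus S$ (with induced order) is locally unsymmetric. $P$ is total locally unsymmetric if it is $k$-stable locally unsymmetric for every finite $k<|P|$. *)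

From HB Require Import structures.
From mathcomp Require Import all_boot all_order all_algebra.
From mathcomp Require Import finmap.
From mathcomp Require Import all_classical all_reals all_analysis.
Set Implicit Arguments. Unset Strict Implicit. Unset Printing Implicit Defensive.
Import Order.TTheory GRing.Theory Num.Theory.
Local Open Scope classical_set_scope.
Local Open Scope ring_scope.

(* Posets presented as a carrier set X : set T with an order le on T   *)
(* (induced order).                                                    *)
Section PosetNotions.
Variables (T : choiceType) (le : T -> T -> Prop).

Definition plt (a b : T) : Prop := le a b /\ a <> b.

Definition card (A : set T) : nat := (#|` fset_set A|)%fset.

Definition is_chain (X C : set T) : Prop :=
  C `<=` X /\ forall a b, C a -> C b -> le a b \/ le b a.

Definition ell (X : set T) (n : nat) : Prop :=
  (exists C, [/\ is_chain X C, finite_set C & card C = n]) /\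
  (forall C, is_chain X C -> finite_set C -> (card C <= n)%N).

Definition nrel (A : set T) : nat :=
  (#|` fset_set [set p : T * T | [/\ A p.1, A p.2 & plt p.1 p.2]]|)%fset.

Definition maxord (X A : set T) : Prop :=
  [/\ A `<=` X, finite_set A &
   forall B, B `<=` X -> finite_set B -> card B = card A -> (nrel B <= nrel A)%N].

Definition automorphism (P : set T) (s : T -> T) : Prop :=
  [/\ forall a, P a -> P (s a),
      forall a b, P a -> P b -> s a = s b -> a = b,
      forall b, P b -> exists2 a, P a & s a = b &
      forall a b, P a -> P b -> (le a b <-> le (s a) (s b))].

Definition moved (P : set T) (s : T -> T) : set T := [set a | P a /\ s a <> a].

End PosetNotions.

Definition poset_iso (T U : Type) (leX : T -> T -> Prop) (X : set T)
    (leY : U -> U -> Prop) (Y : set U) : Prop :=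
  exists f : T -> U,
    [/\ forall a, X a -> Y (f a),
        forall a b, X a -> X b -> f a = f b -> a = b,
        forall y, Y y -> exists2 a, X a & f a = y &
        forall a b, X a -> X b -> (leX a b <-> leY (f a) (f b))].

(* finite posets Q are given on 'I_n by a boolean relation *)
Definition fin_partial_order (n : nat) (q : rel 'I_n) : Prop :=
  [/\ forall i, q i i,
      forall i j, q i j -> q j i -> i = j &
      forall i j k, q i j -> q j k -> q i k].

Section LocalSymmetry.
Variables (T : choiceType) (le : T -> T -> Prop) (P : set T).
Variables (n : nat) (q : rel 'I_n) (r : nat).

Definition generator (s : T -> T) (S : nat -> set T) : Prop :=
  let Sig := moved P s in
  [/\ automorphism le P s,
      (forall i, (i < r)%N ->
        [/\ S i `<=` Sig,
            poset_iso le (S i) (fun a b => q a b) [set: 'I_n],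
            maxord le Sig (S i),
            (forall S', maxord le Sig S' ->
               (exists l, ell le S' l /\ ell le Sig l) ->
               (card (S i) <= card S')%N) &
            s @` S i = S (i.+1 %% r)%N /\
            exists l, ell le (S i) l /\ ell le Sig l]) &
      Sig = \bigcup_(i in [set i : nat | (i < r)%N]) S i].

Definition sym1 (a b : T) : Prop :=
  exists (s : T -> T) (S : nat -> set T) (i j q0 : nat),
    [/\ generator s S, (i < r)%N, (j < r)%N, S i <> S j &
        [/\ S i a, (1 <= q0 < r)%N, b = iter q0 s a & S j b]].

(* symlev N m a b, for m <= N, is (Q,r,m)-symmetry *)
Fixpoint symlev (N : nat) : nat -> T -> T -> Prop :=
  match N with
  | 0 => fun _ a b => a = b
  | N'.+1 => fun m a b =>
      if (m <= N')%N then symlev N' m a b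
      else if m == 1%N then sym1 a b
      else (forall j, (j < m)%N -> ~ symlev N' j a b) /\
           exists c j, [/\ (1 <= j)%N, (j < m)%N,
                          symlev N' j a c & symlev N' (m - j) c b]
  end.

Definition symQ (a b : T) : Prop := exists m, symlev m m a b.

Definition quot_carrier : set (set T) :=
  [set E | exists2 a, P a & E = [set b | P b /\ symQ a b]].

Definition quot_le (E F : set T) : Prop :=
  exists e f, [/\ E e, F f & le e f].

End LocalSymmetry.

Definition locally_symmetric (T : choiceType) (le : T -> T -> Prop) (P : set T) :=
  exists (n : nat) (q : rel 'I_n) (r : nat),
    [/\ fin_partial_order q, (2 <= r)%N &
        ~ poset_iso le P (@quot_le T le) (quot_carrier le P q r)].

Definition locally_unsymmetric (T : choiceType) (le : T -> T -> Prop) (P : set T) :=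
  ~ locally_symmetric le P.

Definition k_stable_lu (T : choiceType) (le : T -> T -> Prop) (k : nat) (P : set T) :=
  forall S, S `<=` P -> finite_set S -> (card S <= k)%N ->
    locally_unsymmetric le (P `\` S).

Definition total_lu (T : choiceType) (le : T -> T -> Prop) (P : set T) :=
  forall k : nat, (infinite_set P \/ (k < card P)%N) -> k_stable_lu le k P.

(* Minkowski spacetime M^n = R^{1,n-1}, points are row vectors 'rV_n, *)
(* coordinate 0 is time.                                              *)
Definition causal_le (R : realType) (d : nat) (x y : 'rV[R]_d.+1) : Prop :=
  let v := y - x in
  0 <= v 0 0 /\ \sum_(i < d) (v 0 (lift ord0 i)) ^+ 2 <= (v 0 0) ^+ 2.

(* 'rV_n with its (arbitrary) base point 0, needed for the generated
   sigma-algebra construction *)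
Definition prV (R : realType) (n : nat) : Type := 'rV[R]_n.
HB.instance Definition _ (R : realType) (n : nat) := Choice.on (prV R n).
HB.instance Definition _ (R : realType) (n : nat) :=
  isPointed.Build (prV R n) (0 : 'rV[R]_n).

Section Sprinkle.
Variables (R : realType) (n : nat).

Definition box_set (a b : 'rV[R]_n) : set 'rV[R]_n :=
  [set x | forall i, a 0 i < x 0 i < b 0 i].

Definition boxes : set (set (prV R n)) := [set B | exists a b, B = box_set a b].

(* R^n with its Borel sigma-algebra (generated by open boxes) *)
Local Notation Rn := (g_sigma_algebraType boxes).

(* nu is the Lebesgue volume measure: it gives boxes their volume
   (this determines it uniquely on Borel sets) *)
Definition is_lebesgue (nu : {measure set Rn -> \bar R}) : Prop :=
  forall a b, nu (box_set a b) = (\prod_(i < n) Num.max 0 (b 0 i - a 0 i))%:E.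

Definition bounded_set (U : set 'rV[R]_n) : Prop :=
  exists M : R, forall x, U x -> forall i, `|x 0 i| <= M.

Definition poisson_prob (mu : R) (k : nat) : R :=
  mu ^+ k / (k`!)%:R * expR (- mu).

Definition count_event (Om : Type) (S : Om -> set 'rV[R]_n) (U : set 'rV[R]_n)
    (k : nat) : set Om :=
  [set w | finite_set (S w `&` U) /\ card (S w `&` U) = k].

(* S is (the set of points of) a Poisson point process of intensity rho * nu:
   for pairwise disjoint bounded Borel sets U_1..U_m, the counts are
   independent and Poisson with means rho * nu(U_i) *)
Definition poisson_point_process (dO : measure_display) (Om : measurableType dO)
    (Pr : probability Om R) (nu : {measure set Rn -> \bar R}) (rho : R)
    (S : Om -> set 'rV[R]_n) : Prop :=
  forall (m : nat) (U : 'I_m -> set Rn) (k : 'I_m -> nat),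
    (forall i, measurable (U i) /\ bounded_set (U i)) ->
    (forall i j, i != j -> U i `&` U j = set0) ->
    let E := [set w | forall i, count_event S (U i) (k i) w] in
    measurable E /\
    Pr E = (\prod_(i < m) poisson_prob (rho * fine (nu (U i))) (k i))%:E.

End Sprinkle.

Notation Rn R n := (g_sigma_algebraType (@boxes R n)).

From Pilot Require Import Defs.
From HB Require Import structures.
From mathcomp Require Import all_boot all_order all_algebra finmap.
From mathcomp Require Import all_classical all_reals all_analysis.
From mathcomp Require Import lra.
Import Order.TTheory GRing.Theory Num.Theory numFieldNormedType.Exports.
Local Open Scope classical_set_scope.
Local Open Scope ring_scope.
Set Implicit Arguments. Unset Strict Implicit. Unset Printing Implicit Defensive.

(* A poset in which every automorphism moving only finitely many points is the
   identity is locally unsymmetric: the moved set of a (Q,r)-generator is a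
   finite union of copies of Q, so no two distinct points are (Q,r)-symmetric
   and the quotient is the poset itself.  Hence it suffices to show that,
   almost surely, no S \ F (F finite) has a nontrivial finitely supported
   automorphism.  In dimension 1 the order is total, and a moved point with
   minimal time coordinate gives a contradiction.  In higher dimension, two
   distinct points x, y differ in some null coordinate t - (+/-) x_k, and a
   small cube far out along a null ray lies in the causal future of the point
   with the smaller null coordinate but not of the other one.  Translating the
   cube along the ray gives disjoint sets of equal volume, so the Poisson
   process almost surely hits infinitely many of them; restricting to rational
   rays makes this a countable family of almost sure events.  The hits give,
   outside any finite set, points separating x from y, and an automorphism
   fixing such a point cannot map y to x. *)

Section FinitelyRigid.
Variables (T : choiceType) (le : T -> T -> Prop).

Definition finitely_rigid (P : set T) := forall s, automorphism le P s ->
  finite_set (moved P s) -> moved P s = set0.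

Lemma finite_set_poset_iso (U : finType) (leX : T -> T -> Prop) (X : set T)
    (leY : U -> U -> Prop) :
  poset_iso leX X leY [set: U] -> finite_set X.
Proof.
move=> [f [_ f_inj f_surj _]].
have [g gK] : {g : U -> T & forall y, X (g y) /\ f (g y) = y}.
  apply: (@choice _ _ (fun y a => X a /\ f a = y)) => y.
  by have [a Xa fa] := f_surj y I; exists a.
apply: (@sub_finite_set _ _ (g @` [set: U])); last exact/finite_image/finite_finset.
by move=> a Xa; exists (f a) => //; have [? ?] := gK (f a); exact: f_inj.
Qed.

Section NoSym1.
Variables (P : set T) (n : nat) (q : rel 'I_n) (r : nat).
Hypothesis no_sym1 : forall a b, ~ sym1 le P q r a b.

Lemma symlev_eq N m a b : symlev le P q r N m a b -> a = b.
Proof.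
elim: N m a b => [|N IH] m a b //=.
case: ifP => _; first exact: IH.
case: ifP => _; first by move/no_sym1.
by move=> [_ [c [j [_ _ /IH -> /IH ->]]]].
Qed.

Lemma quot_le_iso : poset_iso le P (@quot_le T le) (quot_carrier le P q r).
Proof.
have symQ_eq a b : symQ le P q r a b -> a = b by move=> [m]; exact: symlev_eq.
exists (fun a => [set b | P b /\ symQ le P q r a b]); split.
- by move=> a Pa; exists a.
- move=> a b Pa Pb E.
  have : [set c | P c /\ symQ le P q r b c] a by rewrite -E; split => //; exists 0%N.
  by move=> [_ /symQ_eq].
- by move=> E [a Pa ->]; exists a.
- move=> a b Pa Pb; split => [lab|[e [f [[_ /symQ_eq <-] [_ /symQ_eq <-] //]]]].
  by exists a, b; split => //; split => //; exists 0%N.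
Qed.

End NoSym1.

Lemma locally_unsymmetric_finitely_rigid P :
  finitely_rigid P -> locally_unsymmetric le P.
Proof.
move=> rigid [n [q [r [_ _ /(_ (quot_le_iso _))]]]]; apply.
move=> a b [s [S [i [j [q0 [[aut_s HS Sig_s] ir _ _ [Sa _ _ _]]]]]]].
have [SiSig _ _ _ _] := HS i ir.
have fin_Sig : finite_set (moved P s).
  rewrite Sig_s; apply: bigcup_finite; first exact: finite_II.
  by move=> k /HS [_ iso_k _ _ _]; exact: finite_set_poset_iso iso_k.
by have := SiSig a Sa; rewrite (rigid s aut_s fin_Sig).
Qed.

Definition cofinitely_separating (P : set T) := forall x y, x <> y ->
  forall F, finite_set F -> exists z, [/\ P z, ~ F z & ~ (le x z <-> le y z)].

Lemma finitely_rigid_separating (P F : set T) :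
  cofinitely_separating P -> finite_set F -> finitely_rigid (P `\` F).
Proof.
move=> sepP finF s [s_in _ _ s_mono] fin_Sig.
apply/seteqP; split => // a [PFa sa].
have finSigF : finite_set (moved (P `\` F) s `|` F) by rewrite finite_setU.
have [z [Pz Fz sep_z]] := sepP _ _ (nesym sa) _ finSigF.
have PFz : (P `\` F) z by split => // ?; apply: Fz; right.
have sz : s z = z by apply: contrapT => sz; apply: Fz; left.
by apply: sep_z; rewrite -{2}sz; exact: s_mono.
Qed.

Lemma total_lu_finitely_rigid P :
  (forall F, finite_set F -> finitely_rigid (P `\` F)) -> total_lu le P.
Proof.
by move=> rigid k _ F _ finF _; exact/locally_unsymmetric_finitely_rigid/rigid.
Qed.

End FinitelyRigid.

Lemma finite_set_argmin (R : realType) (T : choiceType) (A : set T) (g : T -> R) :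
  finite_set A -> A !=set0 -> exists2 m, A m & forall b, A b -> g m <= g b.
Proof.
move=> finA [a0 Aa0].
have a0A : a0 \in fset_set A by rewrite in_fset_set // inE.
have := @arg_minP _ _ (fset_set A) [` a0A]%fset xpredT (fun i => g (val i)).
case=> // m _ min_m.
exists (val m); first by have := valP m; rewrite in_fset_set // inE.
move=> b Ab; have bA : b \in fset_set A by rewrite in_fset_set // inE.
exact: (min_m [` bA]%fset).
Qed.

Lemma finite_set_bounded_above (R : realType) (T : choiceType) (F : set T)
    (g : T -> R) : finite_set F -> exists M, forall f, F f -> g f <= M.
Proof.
move=> finF; exists (\big[Num.max/0]_(f <- fset_set F) g f) => f Ff.
by apply: le_bigmax_seq => //; rewrite in_fset_set // inE.
Qed.

Lemma finitely_rigid_real_embedding (R : realType) (T : choiceType)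
    (le : T -> T -> Prop) (P : set T) (g : T -> R) :
  (forall a b, P a -> P b -> g a = g b -> a = b) ->
  (forall a b, P a -> P b -> le a b <-> g a <= g b) -> finitely_rigid le P.
Proof.
move=> g_inj g_mono s [s_in s_inj s_surj s_mono] fin_Sig.
apply/seteqP; split => // a Sig_a.
have [m [Pm sm] min_m] := finite_set_argmin g fin_Sig (ex_intro _ a Sig_a).
have [m' Pm' sm'] := s_surj _ Pm.
have Sig_sm : moved P s (s m).
  by split; [exact: s_in | move/(s_inj _ _ (s_in _ Pm) Pm)].
have Sig_m' : moved P s m'.
  by split => // mm'; apply: sm; rewrite -{1}sm' mm' -sm' mm'.
have le_m_sm : g m <= g (s m) by exact: min_m.
have le_sm_m : g (s m) <= g m.
  have /(s_mono _ _ Pm Pm') : le m m' by apply/g_mono => //; exact: min_m.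
  by rewrite sm'; move/g_mono; apply => //; exact: s_in.
apply: sm; apply: g_inj => //; first exact: s_in.
by apply/le_anti; rewrite le_sm_m.
Qed.

Lemma causal_le_time_line (R : realType) (x y : 'rV[R]_1) :
  causal_le x y <-> x 0 0 <= y 0 0.
Proof.
rewrite /causal_le big_ord0 !mxE subr_ge0; split => [[] //|->]; split => //.
exact: sqr_ge0.
Qed.

Lemma finitely_rigid_time_line (R : realType) (P : set 'rV[R]_1) :
  finitely_rigid (@causal_le R 0) P.
Proof.
apply: (@finitely_rigid_real_embedding R _ _ _ (fun x : 'rV[R]_1 => x 0 0)).
  by move=> a b _ _ ab; apply/rowP => i; rewrite (ord1 i).
by move=> a b _ _; exact: causal_le_time_line.
Qed.

Section NullCoordinates.
Variables (R : realType) (d : nat).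
Implicit Types (x y z : 'rV[R]_d.+1) (k : 'I_d) (b : bool).

Definition null_coord k b x := x 0 0 - (-1) ^+ b * x 0 (lift ord0 k).
Definition conull_coord k b x := x 0 0 + (-1) ^+ b * x 0 (lift ord0 k).

Lemma sum_spatial_sqr_split k (v : 'rV[R]_d.+1) :
  \sum_(i < d) v 0 (lift ord0 i) ^+ 2 =
  v 0 (lift ord0 k) ^+ 2 + \sum_(i < d | i != k) v 0 (lift ord0 i) ^+ 2.
Proof. by rewrite (bigD1 k). Qed.

Lemma null_coord_le_causal k b x z :
  causal_le x z -> null_coord k b x <= null_coord k b z.
Proof.
move=> [t_ge0]; rewrite (sum_spatial_sqr_split k) /null_coord.
have : 0 <= \sum_(i < d | i != k) (z - x) 0 (lift ord0 i) ^+ 2.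
  by apply: sumr_ge0 => i _; exact: sqr_ge0.
move: t_ge0; rewrite !mxE.
by case: b; rewrite ?expr0 ?expr1 ?mulN1r ?mul1r => t_ge0 sum_le; nra.
Qed.

Lemma causal_le_null_coords k b x z :
  let a := null_coord k b z - null_coord k b x in
  let c := conull_coord k b z - conull_coord k b x in
  0 <= a -> 0 <= c ->
  \sum_(i < d | i != k) (z - x) 0 (lift ord0 i) ^+ 2 <= a * c -> causal_le x z.
Proof.
rewrite /causal_le /= (sum_spatial_sqr_split k) /null_coord /conull_coord !mxE.
by case: b; rewrite ?expr0 ?expr1 ?mulN1r ?mul1r => a_ge0 c_ge0 rest_le; split; nra.
Qed.

Lemma null_coords_eq k x y :
  null_coord k false x = null_coord k false y ->
  null_coord k true x = null_coord k true y ->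
  x 0 0 = y 0 0 /\ x 0 (lift ord0 k) = y 0 (lift ord0 k).
Proof. by rewrite /null_coord expr0 expr1 mulN1r mul1r => ? ?; split; lra. Qed.

Lemma exists_null_coord_neq x y : (0 < d)%N -> x != y ->
  exists k b, null_coord k b x != null_coord k b y.
Proof.
move=> d_gt0 xy; apply: contrapT => all_eq; move/eqP: xy; apply.
have null_eq k b : null_coord k b x = null_coord k b y.
  by apply: contrapT => neq; apply: all_eq; exists k, b; apply/eqP.
apply/rowP => i; case: (unliftP ord0 i) => [k ->|->].
  by have [_ ->] := null_coords_eq (null_eq k false) (null_eq k true).
pose k0 := Ordinal d_gt0.
by have [-> _] := null_coords_eq (null_eq k0 false) (null_eq k0 true).
Qed.

End NullCoordinates.

Section Cubes.
Variables (R : realType) (n : nat).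
Implicit Types (a b c : 'rV[R]_n) (h : R).

Definition cube c h : set 'rV[R]_n := box_set (c - const_mx h) (c + const_mx h).

Lemma cubeP c h z : cube c h z <-> forall i, c 0 i - h < z 0 i < c 0 i + h.
Proof. by split => cz i; move: (cz i); rewrite !mxE. Qed.

Lemma measurable_box_set a b : measurable (box_set a b : set (Rn R n)).
Proof. by apply: sub_sigma_algebra; exists a, b. Qed.

Lemma bounded_box_set a b : Defs.bounded_set (box_set a b).
Proof.
exists (\sum_i (`|a 0 i| + `|b 0 i|)) => x abx i.
apply: (@le_trans _ _ (`|a 0 i| + `|b 0 i|)).
  have /andP [ax xb] := abx i; rewrite ler_norml.
  have := ler_norm (a 0 i); have := ler_norm (- a 0 i); have := ler_norm (b 0 i);
  have := ler_norm (- b 0 i); rewrite !normrN => ? ? ? ?; apply/andP; split; lra.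
by rewrite (bigD1 i) //= lerDl; apply: sumr_ge0 => *; exact: addr_ge0.
Qed.

Lemma lebesgue_cube (nu : {measure set (Rn R n) -> \bar R}) c h :
  is_lebesgue nu -> 0 <= h -> nu (cube c h) = ((2 * h) ^+ n)%:E.
Proof.
move=> nu_leb h_ge0; rewrite nu_leb -[X in _ ^+ X]card_ord -prodr_const.
by congr (_%:E); apply: eq_bigr => i _; rewrite !mxE max_r; lra.
Qed.

End Cubes.

Section NullCubes.
Variables (R : realType) (d : nat).
Implicit Types (x y z : 'rV[R]_d.+1) (k : 'I_d) (b : bool) (p t h : R).

Definition null_ray k b p t : 'rV[R]_d.+1 :=
  \row_i (if i == ord0 then p + t else if i == lift ord0 k then (-1) ^+ b * t else 0).

Lemma null_ray_cube_coords k b p t h z : cube (null_ray k b p t) h z ->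
  [/\ p + t - h < z 0 0 < p + t + h,
      p - 2 * h < null_coord k b z < p + 2 * h,
      p + 2 * t - 2 * h < conull_coord k b z < p + 2 * t + 2 * h &
      forall i, i != k -> - h < z 0 (lift ord0 i) < h].
Proof.
have lift_neq0 i : (lift ord0 i == ord0 :> 'I_d.+1) = false.
  by rewrite eq_sym (negbTE (neq_lift _ _)).
move=> /cubeP cz.
have := cz ord0; rewrite !mxE eqxx => /andP [t_lo t_hi].
have := cz (lift ord0 k); rewrite !mxE lift_neq0 eqxx => /andP [k_lo k_hi].
have z_rest i : i != k -> - h < z 0 (lift ord0 i) < h.
  move=> ik; have := cz (lift ord0 i).
  by rewrite !mxE lift_neq0 (inj_eq lift_inj) (negbTE ik) !add0r.
rewrite /null_coord /conull_coord t_lo t_hi; clear cz.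
by case: b k_lo k_hi; rewrite ?expr0 ?expr1 => lo hi; split => //;
  apply/andP; split; lra.
Qed.

Lemma null_ray_cube_not_future k b p t h y : p + 2 * h <= null_coord k b y ->
  cube (null_ray k b p t) h `<=` [set z | ~ causal_le y z].
Proof.
move=> yp z /null_ray_cube_coords [_ /andP [_ zp] _ _] /(null_coord_le_causal k b).
by rewrite leNgt (lt_le_trans zp yp).
Qed.

Lemma null_ray_cube_future k b p h x : 0 < h -> null_coord k b x + 3 * h < p ->
  exists T0, forall t, T0 <= t ->
    cube (null_ray k b p t) h `<=` [set z | causal_le x z].
Proof.
move=> h_gt0 xp.
pose C := \sum_(i < d | i != k) (h + `|x 0 (lift ord0 i)|) ^+ 2.
have C_ge0 : 0 <= C by apply: sumr_ge0 => i _; exact: sqr_ge0.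
(* [C] bounds the spatial coordinates other than [k]; [T0] is chosen so that
   [h * (conull_coord z - conull_coord x) >= C] on the cube. *)
exists ((C / h + conull_coord k b x - p + 2 * h) / 2) => t tT0 z.
move=> /null_ray_cube_coords [_ /andP [zp _] /andP [zc _] z_rest].
have hC : C <= h * (conull_coord k b z - conull_coord k b x).
  by rewrite -ler_pdivrMl // mulrC; lra.
apply: (causal_le_null_coords (k := k) (b := b)); [lra | nra |].
apply: le_trans (_ : C <= _); last by apply: (le_trans hC); nra.
apply: ler_sum => i ik; have /andP [zi_lo zi_hi] := z_rest i ik.
have := ler_norm (x 0 (lift ord0 i)); have := ler_norm (- x 0 (lift ord0 i)).
by rewrite normrN !mxE => ? ?; nra.
Qed.

Definition null_cubes k b p h (j : nat) := cube (null_ray k b p (j%:R * (2 * h))) h.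

Lemma null_cubes_disjoint k b p h i j :
  i != j -> null_cubes k b p h i `&` null_cubes k b p h j = set0.
Proof.
wlog ij : i j / (i < j)%N.
  move=> wlog_ij ij; have [lt_ij|lt_ji|eq_ij] := ltngtP i j.
  - exact: wlog_ij.
  - by rewrite setIC wlog_ij // eq_sym.
  - by rewrite eq_ij eqxx in ij.
move=> _; apply/seteqP; split => // z [].
move=> /null_ray_cube_coords [/andP [zi_lo zi_hi] _ _ _].
move=> /null_ray_cube_coords [/andP [zj_lo zj_hi] _ _ _].
have : i%:R + 1 <= j%:R :> R by rewrite natr1 ler_nat.
nra.
Qed.

End NullCubes.

Lemma ae_forall_countable (dT : measure_display) (T : sigmaRingType dT)
    (R : realType) (mu : {measure set T -> \bar R}) (I : countType)
    (P : I -> T -> Prop) :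
  (forall i, \forall x \ae mu, P i x) -> \forall x \ae mu, forall i, P i x.
Proof.
(* [choice.] because finmap shadows [pickle] and [unpickle]. *)
move=> aeP; have : \forall x \ae mu,
    forall n, if choice.unpickle n is Some i then P i x else True.
  apply: ae_foralln => n.
  by case: (choice.unpickle n) => [i|]; [exact: aeP | exact: aeW].
by apply: filterS => x Px i; have := Px (choice.pickle i); rewrite choice.pickleK.
Qed.

Lemma le0_geometric_bound (R : realType) (a r : R) :
  0 <= r < 1 -> (forall M, a <= r ^+ M) -> a <= 0.
Proof.
move=> /andP [r_ge0 r_lt1] a_le.
have /cvg_expr r_cvg : `|r| < 1 by rewrite ger0_norm.
rewrite -(cvg_lim _ r_cvg) //.
by apply: limr_ge; [exact: cvgP r_cvg | exact: nearW].
Qed.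

Section PoissonHits.
Variables (R : realType) (n : nat) (nu : {measure set (Rn R n) -> \bar R})
  (rho : R) (dO : measure_display) (Om : measurableType dO) (Pr : probability Om R)
  (S : Om -> set 'rV[R]_n).
Hypotheses (rho_gt0 : 0 < rho) (S_poisson : poisson_point_process Pr nu rho S).

Lemma poisson_misses_all_negligible (U : nat -> set (Rn R n)) (c : R) :
  (forall j, measurable (U j) /\ Defs.bounded_set (U j)) ->
  (forall i j, i != j -> U i `&` U j = set0) ->
  0 < c -> (forall j, c <= fine (nu (U j))) ->
  Pr.-negligible [set w | forall j, S w `&` U j = set0].
Proof.
move=> U_bounded U_disj c_gt0 nuU.
pose r := expR (- (rho * c)).
have r_ge0 : 0 <= r := expR_ge0 _.
pose miss M := [set w | forall i : 'I_M, count_event S (U i) 0%N w].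
have miss_small M : measurable (miss M) /\ (Pr (miss M) <= (r ^+ M)%:E)%E.
  have [i j ij|mA ->] :=
    S_poisson (fun _ => 0%N) (fun i : 'I_M => U_bounded i).
    by apply: U_disj; apply: contra ij => /eqP/val_inj ->.
  split => //; rewrite lee_fin -[X in r ^+ X]card_ord -prodr_const.
  apply: ler_prod => i _; rewrite /Defs.poisson_prob expr0 fact0 divr1 mul1r.
  by rewrite expR_ge0 ler_expR lerN2 ler_pM2l ?nuU.
have miss_meas : measurable (\bigcap_M miss M).
  by apply: bigcapT_measurable => M; case: (miss_small M).
have le_miss M : (Pr (\bigcap_M miss M) <= (r ^+ M)%:E)%E.
  have [mM PM] := miss_small M; apply: le_trans PM.
  by apply: le_measure; rewrite ?inE //; exact: bigcap_inf.
exists (\bigcap_M miss M); split => //.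
- apply/eqP; rewrite eq_le measure_ge0 andbT.
  rewrite -(fineK (fin_num_measure _ _ _)) // lee_fin.
  apply: (le0_geometric_bound (r := r)) => [|M].
    by rewrite r_ge0 expR_lt1 oppr_lt0 mulr_gt0.
  by rewrite -lee_fin fineK ?le_miss // fin_num_measure.
- move=> w miss_w M _ i; rewrite /count_event /= miss_w.
  by rewrite /Defs.card fset_set0; split => //; exact: finite_set0.
Qed.

Lemma ae_poisson_hits_infinitely_often (U : nat -> set (Rn R n)) (c : R) :
  (forall j, measurable (U j) /\ Defs.bounded_set (U j)) ->
  (forall i j, i != j -> U i `&` U j = set0) ->
  0 < c -> (forall j, c <= fine (nu (U j))) ->
  \forall w \ae Pr, forall K, exists2 j, (K <= j)%N & S w `&` U j !=set0.
Proof.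
move=> U_bounded U_disj c_gt0 nuU; apply: ae_foralln => K.
apply: (@negligibleS _ _ _ _ [set w | forall j, S w `&` U (K + j) = set0]).
  move=> w /= miss_w j; apply/eqP/negbNE/negP => /set0P hit.
  by apply: miss_w; exists (K + j)%N; rewrite ?leq_addr.
apply: (poisson_misses_all_negligible (c := c)) => // i j ij.
by apply: U_disj; rewrite eqn_add2l.
Qed.

End PoissonHits.

Lemma ae_poisson_hits_null_cubes (R : realType) (d : nat)
    (nu : {measure set (Rn R d.+1) -> \bar R}) (rho : R)
    (dO : measure_display) (Om : measurableType dO) (Pr : probability Om R)
    (S : Om -> set 'rV[R]_d.+1) :
  is_lebesgue nu -> 0 < rho -> poisson_point_process Pr nu rho S ->
  \forall w \ae Pr, forall k b (p h : rat), (0 : R) < ratr h -> forall K,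
    exists2 j, (K <= j)%N & S w `&` null_cubes k b (ratr p) (ratr h) j !=set0.
Proof.
move=> nu_leb rho_gt0 S_poisson.
apply: ae_forall_countable => k; apply: ae_forall_countable => b.
apply: ae_forall_countable => p; apply: ae_forall_countable => h.
have [h_gt0|_] := ltP (0 : R) (ratr h); last exact: aeW.
have h_ge0 := ltW h_gt0.
apply: filterS (ae_poisson_hits_infinitely_often rho_gt0 S_poisson
  (c := (2 * ratr h) ^+ d.+1) _
  (@null_cubes_disjoint _ _ k b (ratr p) (ratr h)) _ _) => //.
- by move=> j; split; [exact: measurable_box_set | exact: bounded_box_set].
- by rewrite exprn_gt0 // mulr_gt0.
- by move=> j; rewrite lebesgue_cube.
Qed.

Lemma exists_rat_slab (R : realType) (u v : R) : u < v -> exists hq pq : rat,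
  [/\ (0 : R) < ratr hq, u + 3 * ratr hq < ratr pq & ratr pq + 2 * ratr hq < v].
Proof.
move=> uv; have [hq /itvP h_in] : exists hq, ratr hq \in `]0, (v - u) / 5[.
  by apply: rat_in_itvoo; rewrite divr_gt0 // subr_gt0.
have h_gt0 : 0 < ratr hq :> R by rewrite h_in.
have h_gap : 5 * ratr hq < v - u by rewrite mulrC -ltr_pdivlMr ?h_in.
have [pq /itvP p_in] : exists pq,
    ratr pq \in `]u + 3 * ratr hq, v - 2 * ratr hq[ by apply: rat_in_itvoo; lra.
have /andP [u_p p_v] : u + 3 * ratr hq < ratr pq < v - 2 * ratr hq by rewrite !p_in.
by exists hq, pq; split => //; lra.
Qed.

Lemma exists_nat_mul_gt (R : realType) (T c : R) :
  0 < c -> exists K, forall j, (K <= j)%N -> T < j%:R * c.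
Proof.
move=> c_gt0; pose K := Num.bound (`|T| / c); exists K => j Kj.
have : `|T| / c < K%:R by apply: archi_boundP; rewrite divr_ge0 // ltW.
have : K%:R * c <= j%:R * c by rewrite ler_pM2r // ler_nat.
by rewrite ltr_pdivrMr //; have := ler_norm T; lra.
Qed.

Lemma cofinitely_separating_null_cubes (R : realType) (d : nat)
    (P : set 'rV[R]_d.+1) : (0 < d)%N ->
  (forall k b (p h : rat), (0 : R) < ratr h -> forall K,
    exists2 j, (K <= j)%N & P `&` null_cubes k b (ratr p) (ratr h) j !=set0) ->
  cofinitely_separating (@causal_le R d) P.
Proof.
move=> d_gt0 hits x y /eqP xy F finF.
have [k [b neq_xy]] := exists_null_coord_neq d_gt0 xy.
wlog lt_xy : x y {xy neq_xy} / null_coord k b x < null_coord k b y.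
  move=> wlog_xy; move: neq_xy; rewrite neq_lt => /orP [/wlog_xy //|].
  move=> /wlog_xy [z [Pz Fz sep_z]].
  by exists z; split => // xz_yz; apply: sep_z; exact: iff_sym.
have [hq [pq [h_gt0 x_p p_y]]] := exists_rat_slab lt_xy.
set h := ratr hq in h_gt0 x_p p_y *; set p := ratr pq in x_p p_y *.
have [T0 x_fut] := null_ray_cube_future h_gt0 x_p.
have [TF F_past] := finite_set_bounded_above (fun f : 'rV[R]_d.+1 => f 0 0) finF.
have h2_gt0 : 0 < 2 * h by lra.
have [K K_large] := exists_nat_mul_gt (Num.max T0 (TF - p + h)) h2_gt0.
have [j Kj [z [Pz cube_z]]] := hits k b pq hq h_gt0 K.
have := K_large j Kj; rewrite gt_max => /andP [T0_t TF_t].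
have [/andP [z_lo _] _ _ _] := null_ray_cube_coords cube_z.
exists z; split => //; first by move=> /F_past; lra.
move=> xz_yz; apply: (null_ray_cube_not_future _ cube_z); first lra.
by apply/xz_yz/(x_fut (j%:R * (2 * h))) => //; exact: ltW.
Qed.

Theorem mainTheorem15 (R : realType) (d : nat)
    (nu : {measure set (Rn R d.+1) -> \bar R}) (rho : R)
    (dO : measure_display) (Om : measurableType dO) (Pr : probability Om R)
    (S : Om -> set 'rV[R]_d.+1) :
  is_lebesgue nu -> 0 < rho ->
  poisson_point_process Pr nu rho S ->
  {ae Pr, forall w, total_lu (@causal_le R d) (S w)}.
Proof.
move=> nu_leb rho_gt0 S_poisson.
case: d nu S nu_leb S_poisson => [|d] nu S nu_leb S_poisson.
  apply: aeW => w; apply: total_lu_finitely_rigid => F _.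
  exact: finitely_rigid_time_line.
apply: filterS (ae_poisson_hits_null_cubes nu_leb rho_gt0 S_poisson) => w hits.
apply: total_lu_finitely_rigid => F finF; apply: finitely_rigid_separating => //.
exact: cofinitely_separating_null_cubes hits.
Qed.
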